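(* Let $N\ge2$ and $\alpha\in\mathbb{C}^N$. The set $\mathcal{M}_{N,\infty}$ is dense in $\mathbb{C}$ if and only if $\mathbb{Z}+\alpha_1\mathbb{Z}+\cdots+\alpha_N\mathbb{Z}$ is dense in $\mathbb{C}$.
   Context: For $(\tau,\xi)\in\mathbb{Z}\times\mathbb{Z}^N$ write $|(\tau,\xi)|=|\tau|+|\xi_1|+\cdots+|\xi_N|$ and, for $\lambda\in\mathbb{C}$, $\rho_\lambda(\tau,\xi)=\tau+\alpha_1\xi_1+\cdots+\alpha_N\xi_N-\lambda$. For $j\in\mathbb{N}$ let $\mathcal{M}_N(j)=\bigcup_{(\tau,\xi)\in\mathbb{Z}\times\mathbb{Z}^N,\ |(\tau,\xi)|>1}\{\lambda\in\mathbb{C}: |\rho_\lambda(\tau,\xi)|<|(\tau,\xi)|^{-j}\}$, and $\mathcal{M}_{N,\infty}=\bigcap_{j\in\mathbb{N}}\mathcal{M}_N(j)$. *)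

From HB Require Import structures.
From mathcomp Require Import all_boot all_order all_algebra.
From mathcomp Require Import reals.
From mathcomp.real_closed Require Import complex.
Set Implicit Arguments. Unset Strict Implicit. Unset Printing Implicit Defensive.
Import Order.TTheory GRing.Theory Num.Theory.
Local Open Scope ring_scope.

Definition hnorm (N : nat) (tau : int) (xi : 'I_N -> int) : nat :=
  (`|tau| + \sum_(i < N) `|xi i|)%N.

Definition rho (R : realType) (N : nat) (alpha : 'I_N -> R[i]) (lam : R[i])
    (tau : int) (xi : 'I_N -> int) : R[i] :=
  tau%:~R + \sum_(i < N) alpha i * (xi i)%:~R - lam.

Definition MN (R : realType) (N : nat) (alpha : 'I_N -> R[i]) (j : nat)
    (lam : R[i]) : Prop :=
  exists (tau : int) (xi : 'I_N -> int),
    (1 < hnorm tau xi)%N /\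
    `|rho alpha lam tau xi| < ((hnorm tau xi)%:R : R[i]) ^- j.

Definition MNinf (R : realType) (N : nat) (alpha : 'I_N -> R[i])
    (lam : R[i]) : Prop :=
  forall j : nat, MN alpha j lam.

Definition lattice (R : realType) (N : nat) (alpha : 'I_N -> R[i])
    (z : R[i]) : Prop :=
  exists (tau : int) (xi : 'I_N -> int),
    z = tau%:~R + \sum_(i < N) alpha i * (xi i)%:~R.

Definition denseC (R : realType) (S : R[i] -> Prop) : Prop :=
  forall (z : R[i]) (e : R), 0 < e ->
    exists w, S w /\ `|w - z| < (e%:C)%C.

From HB Require Import structures.
From mathcomp Require Import all_boot all_order all_algebra.
From mathcomp Require Import reals.
From mathcomp.real_closed Require Import complex.
From mathcomp Require Import zify ring lra.
Set Implicit Arguments. Unset Strict Implicit. Unset Printing Implicit Defensive.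
Import Order.TTheory GRing.Theory Num.Theory.
Local Open Scope ring_scope.
Local Open Scope complex_scope.

(* Each of the two sets lies in the closure of the other, so one is dense iff
   the other is.  A point of M_{N,oo} lies in every M_N(j), hence within
   2^-j of a lattice point, for every j.  Conversely a lattice point with
   coefficient norm at least 2 belongs to M_{N,oo} (its rho vanishes); the
   finitely many lattice points of coefficient norm at most 1 are approximated
   by adding three times a small nonzero lattice point, which raises the
   coefficient norm to at least 2. *)

Lemma absz_scale_le (k : nat) (a b : int) :
  (k * `|b| <= `|(a + k%:Z * b)%R| + `|a|)%N.
Proof.
rewrite -[(k * _)%N](abszM k b).
move: (k%:Z * b) => c; lia.
Qed.

Lemma hnorm_scale_le {N : nat} (k : nat) (t t' : int) (x x' : 'I_N -> int) :
  (k * hnorm t' x' <= hnorm (t + k%:Z * t')%R (fun i => x i + k%:Z * x' i)%R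
                      + hnorm t x)%N.
Proof.
rewrite /hnorm mulnDr big_distrr /= addnACA -big_split /=.
apply: leq_add; first exact: absz_scale_le.
by apply: leq_sum => i _; apply: absz_scale_le.
Qed.

Section Density.
Variable R : realType.
Implicit Types (z w : R[i]) (e d : R).

Lemma ltC_normD z w e d : `|z| < e%:C -> `|w| < d%:C -> `|z + w| < (e + d)%:C.
Proof.
by move=> ze wd; rewrite rmorphD; apply: le_lt_trans (ler_normD _ _) (ltrD ze wd).
Qed.

Lemma normC_real e : 0 <= e -> `|e%:C| = e%:C.
Proof. by move=> e0; rewrite ger0_norm // -(rmorph0 (real_complex R)) lecR. Qed.

Lemma denseC_approx (S T : R[i] -> Prop) :
  denseC S ->
  (forall s e, S s -> 0 < e -> exists t, T t /\ `|t - s| < e%:C) ->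
  denseC T.
Proof.
move=> Sdense approxT z e e0.
have e2 : 0 < e / 2 by lra.
have [s [Ss sz]] := Sdense z _ e2.
have [t [Tt ts]] := approxT s _ Ss e2.
exists t; split => //.
by rewrite -(subrK s t) -addrA (splitr e); apply: ltC_normD.
Qed.

End Density.

Section LatticeApproximation.
Variables (R : realType) (N : nat) (alpha : 'I_N -> R[i]).

Definition lattice_point (t : int) (x : 'I_N -> int) : R[i] :=
  t%:~R + \sum_(i < N) alpha i * (x i)%:~R.

Lemma lattice_pointDZ (k t t' : int) (x x' : 'I_N -> int) :
  lattice_point (t + k * t') (fun i => x i + k * x' i) =
  lattice_point t x + k%:~R * lattice_point t' x'.
Proof.
rewrite /lattice_point mulrDr mulr_sumr intrD intrM.
under eq_bigr => i _ do rewrite intrD intrM mulrDr [alpha i * (_ * _)]mulrCA.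
by rewrite big_split /=; ring.
Qed.

Lemma lattice_point_hnorm0 (t : int) (x : 'I_N -> int) :
  hnorm t x = 0%N -> lattice_point t x = 0.
Proof.
rewrite /hnorm => /eqP; rewrite addn_eq0 sum_nat_eq0 absz_eq0.
case/andP => /eqP -> /forallP x0.
rewrite /lattice_point add0r big1 // => i _.
by move: (x0 i); rewrite /= absz_eq0 => /eqP ->; rewrite mulr0.
Qed.

Lemma MNinf_lattice_point (t : int) (x : 'I_N -> int) :
  (1 < hnorm t x)%N -> MNinf alpha (lattice_point t x).
Proof.
move=> h_gt1 j; exists t, x; split => //.
by rewrite /rho subrr normr0 invr_gt0 exprn_gt0 // ltr0n; lia.
Qed.

Lemma MNinf_near_lattice (lam : R[i]) (e : R) :
  MNinf alpha lam -> 0 < e ->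
  exists t x, `|lattice_point t x - lam| < e%:C.
Proof.
move=> lamM e0.
have inve_ge0 : 0 <= e^-1 by rewrite invr_ge0 ltW.
set j := Num.bound e^-1.
have [t [x [h_gt1 rho_small]]] := lamM j.
exists t, x; apply: (lt_trans rho_small).
set h := hnorm t x.
(* [h^-j < e] because [e^-1 < j < 2^j <= h^j]. *)
have hj_gt : e^-1 < h%:R ^+ j.
  apply: (lt_trans (archi_boundP inve_ge0)).
  rewrite -natrX ltr_nat; apply: ltn_expl; lia.
rewrite -(rmorph_nat (real_complex R)) -rmorphXn -fmorphV ltcR.
by rewrite -[e]invrK ltf_pV2 ?posrE ?invr_gt0 ?exprn_gt0 ?ltr0n //; lia.
Qed.

Lemma lattice_near_MNinf (w : R[i]) (e : R) :
  denseC (lattice alpha) -> lattice alpha w -> 0 < e ->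
  exists lam, MNinf alpha lam /\ `|lam - w| < e%:C.
Proof.
move=> Ldense [t [x ->]] e0; rewrite -/(lattice_point t x).
case: (leqP 2 (hnorm t x)) => [h_ge2 | h_le1].
  exists (lattice_point t x); split; first exact: MNinf_lattice_point.
  by rewrite subrr normr0 ltcR.
have e8 : 0 < e / 8 by lra.
have [_ [[t' [x' ->]] d_near]] := Ldense (e / 8)%:C _ e8.
rewrite -/(lattice_point t' x') in d_near *.
set d := lattice_point t' x' in d_near *.
have d_small : `|d| < (e / 4)%:C.
  rewrite -(subrK (e / 8)%:C d) (_ : e / 4 = e / 8 + e / 8); last lra.
  rewrite rmorphD; apply: le_lt_trans (ler_normD _ _) _.
  by rewrite normC_real ?ltrD2r //; lra.
have h'_ge1 : (0 < hnorm t' x')%N.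
  rewrite lt0n; apply/eqP => /lattice_point_hnorm0; rewrite -/d => d0.
  by move: d_near; rewrite d0 sub0r normrN normC_real ?ltxx //; lra.
exists (lattice_point (t + 3%:Z * t')%R (fun i => x i + 3%:Z * x' i)%R); split.
  apply: MNinf_lattice_point.
  by have := hnorm_scale_le 3 t t' x x'; lia.
rewrite lattice_pointDZ addrC addKr normrM -pmulrn normr_nat.
apply: (@lt_le_trans _ _ (3%:R * (e / 4)%:C)); first by rewrite ltr_pM2l.
by rewrite -(rmorph_nat (real_complex R)) -rmorphM lecR; lra.
Qed.

End LatticeApproximation.

Theorem lemma2 (R : realType) (N : nat) (hN : (2 <= N)%N)
    (alpha : 'I_N -> R[i]) :
  denseC (MNinf alpha) <-> denseC (lattice alpha).
Proof.
(* The equivalence holds for every [N]. *)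
split=> [Mdense | Ldense]; apply: denseC_approx.
- exact: Mdense.
- move=> lam e lamM e0.
  have [t [x near]] := MNinf_near_lattice lamM e0.
  by exists (lattice_point alpha t x); split => //; exists t, x.
- exact: Ldense.
- by move=> w e; apply: lattice_near_MNinf.
Qed.
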